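(* Any invertible matrix $B\in GL(n,\mathbb{C})$ can be written as a product $B=C_1C_2$ of two invertible diagonalizable matrices $C_1$ and $C_2$ with distinct eigenvalues. One of the $C_i$ may be chosen in a Zariski open set. *)

From mathcomp Require Import all_boot all_order all_algebra.
From mathcomp Require Import reals.
From mathcomp.real_closed Require Import complex.
From mathcomp Require Import mpoly.
Set Implicit Arguments.
Unset Strict Implicit.
Unset Printing Implicit Defensive.
Import GRing.Theory Num.Theory.
Local Open Scope ring_scope.

Definition distinct_eigenvalues (F : fieldType) (n : nat) (A : 'M[F]_n) : Prop :=
  exists s : seq F, [/\ size s = n, uniq s & all (eigenvalue A) s].

Definition inv_diag_distinct (F : fieldType) (n : nat) (A : 'M[F]_n) : Prop :=
  [/\ A \in unitmx, diagonalizable A & distinct_eigenvalues A].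

(* Evaluation of a polynomial in the n*n matrix entries at a matrix C
   (variables indexed by the entries of mxvec C). *)
Definition mx_eval (F : fieldType) (n : nat) (P : {mpoly F[n * n]})
  (C : 'M[F]_n) : F :=
  mpoly.meval (fun i => mxvec C 0 i) P.

Definition in_zariski_basic_open (F : fieldType) (n : nat)
  (P : {mpoly F[n * n]}) (C : 'M[F]_n) : Prop :=
  mx_eval P C != 0.

From mathcomp Require Import all_boot all_order all_algebra all_field.
From mathcomp Require Import reals.
From mathcomp.real_closed Require Import complex.
From mathcomp Require Import mpoly.
Set Implicit Arguments.
Unset Strict Implicit.
Unset Printing Implicit Defensive.
Import GRing.Theory Num.Theory.
Local Open Scope ring_scope.

(* Over an algebraically closed field of characteristic 0, a matrix has
   distinct eigenvalues (and is then diagonalizable) iff the discriminant of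
   its characteristic polynomial is nonzero.  Since adj C * B = det C * C^-1 B,
   the factorization B = C (C^-1 B) works whenever the polynomial
     det C * disc (char C) * disc (char (adj C * B))
   in the entries of C does not vanish at C.  This polynomial is nonzero: on
   the line through A := B D^-1 and a diagonal D with distinct eigenvalues,
   its first two factors do not vanish at D and the third does not vanish at
   A, because adj A * B = det A * D. *)

Lemma rmorph_resultant (aR rR : nzRingType) (f : {rmorphism aR -> rR})
    (p q : {poly aR}) :
  f (lead_coef p) != 0 -> f (lead_coef q) != 0 ->
  f (resultant p q) = resultant (map_poly f p) (map_poly f q).
Proof.
move=> fp_neq0 fq_neq0; rewrite /resultant /Sylvester_mx !size_map_poly_id0 //.
rewrite -det_map_mx /= map_col_mx; congr (\det (col_mx _ _));
  by apply: map_lin1_mx => v; rewrite map_poly_rV rmorphM /= map_rVpoly.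
Qed.

Lemma lead_coef_deriv_monic (R : nzRingType) (p : {poly R}) n :
  p \is monic -> size p = n.+2 -> (n.+1%:R : R) != 0 ->
  lead_coef p^`() = n.+1%:R.
Proof.
move=> /monicP p_monic sz_p n1_neq0.
have coef_n : p^`()`_n = n.+1%:R.
  by rewrite coef_deriv -p_monic /lead_coef sz_p.
suff sz_dp : size p^`() = n.+1 by rewrite /lead_coef sz_dp.
apply/anti_leq/andP; split.
  by rewrite -ltnS -sz_p lt_size_deriv // -size_poly_eq0 sz_p.
rewrite ltnNge; apply: contra n1_neq0 => /leq_sizeP /(_ n (leqnn n)).
by rewrite coef_n => ->.
Qed.

Definition disc (R : comNzRingType) (p : {poly R}) := resultant p p^`().

Lemma rmorph_disc_char_poly (S T : comNzRingType) (f : {rmorphism S -> T}) n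
    (A : 'M[S]_n.+1) :
  (n.+1%:R : T) != 0 -> f (disc (char_poly A)) = disc (char_poly (map_mx f A)).
Proof.
move=> n1_neq0; have n1S_neq0 : (n.+1%:R : S) != 0.
  apply: contraNneq n1_neq0 => n1_eq0.
  by rewrite -(rmorph_nat f) n1_eq0 rmorph0.
have char_monic := char_poly_monic A.
have lead_char : f (lead_coef (char_poly A)) != 0.
  by rewrite (monicP char_monic) rmorph1 oner_neq0.
have lead_deriv : f (lead_coef (char_poly A)^`()) != 0.
  rewrite (lead_coef_deriv_monic char_monic (size_char_poly A)) //.
  by rewrite rmorph_nat.
by rewrite /disc rmorph_resultant // -deriv_map map_char_poly.
Qed.

Lemma char_poly_prod_eigenvalues (F : fieldType) n (A : 'M[F]_n) (s : seq F) :
  size s = n -> uniq s -> all (eigenvalue A) s ->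
  char_poly A = \prod_(z <- s) ('X - z%:P).
Proof.
move=> sz_s uniq_s eig_s.
have roots_s : all (root (char_poly A)) s.
  by apply/allP => x /(allP eig_s); rewrite eigenvalue_root_char.
rewrite {1}(all_roots_prod_XsubC _ roots_s) ?uniq_rootsE //; last first.
  by rewrite size_char_poly sz_s.
by rewrite (monicP (char_poly_monic A)) scale1r.
Qed.

Lemma distinct_eigenvalues_diagonalizable (F : fieldType) n (A : 'M[F]_n) :
  distinct_eigenvalues A -> diagonalizable A.
Proof.
case: n A => [|m] A [s [sz_s uniq_s eig_s]].
  have -> : A = 0 by apply/matrixP => -[].
  exact: diagonalizable0.
apply/diagonalizableP; exists s => //.
by rewrite -(char_poly_prod_eigenvalues sz_s uniq_s eig_s) mxminpoly_dvd_char.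
Qed.

Lemma distinct_eigenvalues_disc (F : fieldType) n (A : 'M[F]_n) :
  distinct_eigenvalues A -> disc (char_poly A) != 0.
Proof.
move=> [s [sz_s uniq_s eig_s]]; rewrite /disc resultant_eq0 -leqNgt.
have := uniq_s; rewrite -separable_prod_XsubC.
rewrite -(char_poly_prod_eigenvalues sz_s uniq_s eig_s).
by rewrite unlock coprimep_def => /eqP ->.
Qed.

Lemma disc_distinct_eigenvalues (F : closedFieldType) n (A : 'M[F]_n) :
  disc (char_poly A) != 0 -> distinct_eigenvalues A.
Proof.
move=> disc_neq0; have [r char_r] := closed_field_poly_normal (char_poly A).
rewrite (monicP (char_poly_monic A)) scale1r in char_r.
exists r; split.
- by apply/eqP; rewrite -eqSS -(size_char_poly A) char_r size_prod_XsubC.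
- rewrite -separable_prod_XsubC -char_r unlock coprimep_def.
  move: disc_neq0; rewrite /disc resultant_eq0 -leqNgt => gcd_le1.
  rewrite eqn_leq gcd_le1 /= size_poly_gt0 gcdp_eq0 negb_and.
  by rewrite -size_poly_gt0 size_char_poly.
- by apply/allP => x x_r; rewrite eigenvalue_root_char char_r root_prod_XsubC.
Qed.

Lemma distinct_eigenvaluesZ (F : fieldType) n (A : 'M[F]_n) (c : F) :
  c != 0 -> distinct_eigenvalues A -> distinct_eigenvalues (c *: A).
Proof.
move=> c_neq0 [s [sz_s uniq_s eig_s]]; exists (map ( *%R c) s); split.
- by rewrite size_map.
- by rewrite map_inj_uniq //; apply: mulfI.
- apply/allP => _ /mapP [x /(allP eig_s) /eigenvalueP [v v_eig v_neq0] ->].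
  by apply/eigenvalueP; exists v; rewrite // -scalemxAr v_eig scalerA.
Qed.

Lemma diag_mx_distinct_eigenvalues (F : fieldType) n (d : 'rV[F]_n) :
  injective (d 0) -> distinct_eigenvalues (diag_mx d).
Proof.
move=> d_inj; exists [seq d 0 i | i <- enum 'I_n]; split.
- by rewrite size_map size_enum_ord.
- by rewrite map_inj_uniq ?enum_uniq.
- apply/allP => _ /mapP [i _ ->]; apply/eigenvalueP; exists (delta_mx 0 i).
    by rewrite -rowE row_diag_mx.
  apply/negP => /eqP /matrixP /(_ 0 i); rewrite !mxE !eqxx => /eqP.
  exact/negP/oner_neq0.
Qed.

Lemma inv_diag_distinct_mx0 (F : fieldType) (C : 'M[F]_0) : inv_diag_distinct C.
Proof.
have distinct_C : distinct_eigenvalues C by exists [::].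
split=> //; last exact: distinct_eigenvalues_diagonalizable.
by rewrite unitmxE det_mx00 unitr1.
Qed.

Definition genericity (R : comNzRingType) n (B X : 'M[R]_n) : R :=
  \det X * disc (char_poly X) * disc (char_poly (\adj X *m B)).

Lemma rmorph_genericity (S T : comNzRingType) (f : {rmorphism S -> T}) n
    (B X : 'M[S]_n.+1) :
  (n.+1%:R : T) != 0 ->
  f (genericity B X) = genericity (map_mx f B) (map_mx f X).
Proof.
move=> n1_neq0; rewrite /genericity !rmorphM /= det_map_mx.
by rewrite !rmorph_disc_char_poly // map_mxM map_mx_adj.
Qed.

Lemma genericity_factor (F : closedFieldType) n (B C : 'M[F]_n) :
  B \in unitmx -> genericity B C != 0 ->
  exists C2, [/\ B = C *m C2, inv_diag_distinct C & inv_diag_distinct C2].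
Proof.
move=> B_unit; rewrite /genericity !mulf_eq0 !negb_or.
move=> /andP[/andP[det_neq0 discC_neq0] discCB_neq0].
have C_unit : C \in unitmx by rewrite unitmxE unitfE.
exists (invmx C *m B); split.
- by rewrite mulKVmx.
- split=> //; last exact: disc_distinct_eigenvalues.
  exact/distinct_eigenvalues_diagonalizable/disc_distinct_eigenvalues.
- have distinct_CB : distinct_eigenvalues (invmx C *m B).
    rewrite /invmx C_unit -scalemxAl.
    apply: distinct_eigenvaluesZ; first by rewrite invr_neq0.
    exact: disc_distinct_eigenvalues.
  split=> //; last exact: distinct_eigenvalues_diagonalizable.
  by rewrite unitmx_mul unitmx_inv C_unit.
Qed.

Lemma exists_unitmx_distinct_eigenvalues (F : numFieldType) n :
  exists2 D : 'M[F]_n, D \in unitmx & distinct_eigenvalues D.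
Proof.
exists (diag_mx (\row_(i < n) i.+1%:R)).
  rewrite unitmxE unitfE det_diag; apply/prodf_neq0 => i _.
  by rewrite mxE pnatr_eq0.
apply: diag_mx_distinct_eigenvalues => i j; rewrite !mxE => /eqP.
by rewrite eqr_nat eqSS => /eqP /val_inj.
Qed.

Lemma exists_genericity_neq0 (F : numClosedFieldType) m (B : 'M[F]_m.+1) :
  B \in unitmx -> exists C, genericity B C != 0.
Proof.
move=> B_unit; have m1_neq0 : (m.+1%:R : F) != 0 by rewrite pnatr_eq0.
have [D D_unit D_distinct] := exists_unitmx_distinct_eigenvalues F m.+1.
pose A := B *m invmx D.
have A_unit : A \in unitmx by rewrite unitmx_mul B_unit unitmx_inv D_unit.
have adjA_B : \adj A *m B = \det A *: D.
  by rewrite -[in LHS](mulmxKV D_unit B) mulmxA mul_adj_mx mul_scalar_mx.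
pose line t := A + t *: (D - A).
pose X := map_mx polyC A + 'X *: map_mx polyC (D - A).
have X_at t : map_mx (horner_eval t) X = line t.
  apply/matrixP => i j; rewrite !mxE /horner_eval.
  by rewrite hornerD hornerM hornerX !hornerC.
have B_at t : map_mx (horner_eval t) (map_mx polyC B) = B.
  by apply/matrixP => i j; rewrite !mxE /horner_eval hornerC.
have line1 : line 1 = D by rewrite /line scale1r addrC subrK.
have line0 : line 0 = A by rewrite /line scale0r addr0.
have neq0_at (p : {poly F}) t : horner_eval t p != 0 -> p != 0.
  by apply: contraNneq => ->; rewrite rmorph0.
have g_neq0 : genericity (map_mx polyC B) X != 0.
  rewrite /genericity; apply/mulf_neq0; first apply/mulf_neq0.
  - apply: (neq0_at _ 1); rewrite -det_map_mx X_at line1.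
    by rewrite -unitfE -unitmxE.
  - apply: (neq0_at _ 1); rewrite rmorph_disc_char_poly // X_at line1.
    exact: distinct_eigenvalues_disc.
  - apply: (neq0_at _ 0); rewrite rmorph_disc_char_poly //.
    rewrite map_mxM map_mx_adj X_at B_at line0 adjA_B.
    apply/distinct_eigenvalues_disc/distinct_eigenvaluesZ => //.
    by rewrite -unitfE -unitmxE.
have /closed_nonrootP [t g_t] := g_neq0.
by exists (line t); rewrite -(X_at t) -(B_at t) -rmorph_genericity.
Qed.

Definition generic_mx (F : fieldType) n : 'M[{mpoly F[n * n]}]_n :=
  \matrix_(i, j) 'X_(mxvec_index i j).

Definition genericity_mpoly (F : fieldType) n (B : 'M[F]_n) :
    {mpoly F[n * n]} :=
  genericity (map_mx (fun c => c%:MP) B) (generic_mx F n).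

Lemma mx_eval_genericity (F : fieldType) n (B C : 'M[F]_n.+1) :
  (n.+1%:R : F) != 0 -> mx_eval (genericity_mpoly B) C = genericity B C.
Proof.
move=> n1_neq0; rewrite /mx_eval rmorph_genericity //.
congr genericity; apply/matrixP => i j; rewrite !mxE.
  exact: mevalC.
by rewrite -mxvecE; apply: mevalXU.
Qed.

Unset Implicit Arguments.

Theorem mainTheorem5 (R : realType) (n : nat) (B : 'M[R[i]]_n) :
  B \in unitmx ->
  (exists C1 C2 : 'M[R[i]]_n,
      [/\ B = C1 *m C2, inv_diag_distinct C1 & inv_diag_distinct C2]) /\
  (exists P : {mpoly R[i][n * n]},
      P != 0 /\
      forall C1 : 'M[R[i]]_n, in_zariski_basic_open P C1 ->
        exists C2 : 'M[R[i]]_n,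
          [/\ B = C1 *m C2, inv_diag_distinct C1 & inv_diag_distinct C2]).
Proof.
case: n B => [|m] B B_unit.
  have mx0_eq (C1 C2 : 'M[R[i]]_0) : C1 = C2 by apply/matrixP => -[].
  have mx0_factor (C1 : 'M[R[i]]_0) : exists C2,
      [/\ B = C1 *m C2, inv_diag_distinct C1 & inv_diag_distinct C2].
    by exists C1; split; [exact: mx0_eq | exact: inv_diag_distinct_mx0..].
  split; first by exists B; exact: mx0_factor.
  by exists 1; split=> [|C1 _]; [exact: oner_neq0 | exact: mx0_factor].
have m1_neq0 : (m.+1%:R : R[i]) != 0 by rewrite pnatr_eq0.
have [C C_generic] := exists_genericity_neq0 B_unit.
split.
  by have [C2 C_factor] := genericity_factor B_unit C_generic; exists C, C2.
exists (genericity_mpoly B); split.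
  apply: contraNneq C_generic => P_eq0.
  by rewrite -mx_eval_genericity // P_eq0 /mx_eval meval0.
move=> C1; rewrite /in_zariski_basic_open mx_eval_genericity //.
exact: genericity_factor.
Qed.
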